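(* Let $X$ be a unital semiring and $\nu:X\to X$, $\nu(x)=x+x$, and $\nu X=\{a\in X: a=a+a\}$. The following are equivalent: (1) $2=4$ in $X$; (2) $\nu$ is a semiring homomorphism; (3) $\nu\circ\nu=\nu$; (4) the image of $\nu$ equals $\nu X$. If these hold, then $\nu X$ is a unital idempotent semiring with multiplicative unit $\nu(1)$, and the corestriction $X\to\nu X$ of $\nu$ is a unital semiring homomorphism.
   Context: A semiring $(X,+,0,\cdot)$: $(X,+,0)$ commutative monoid, $(X,\cdot)$ semigroup, distributivity, $0$ absorbing; unital: has a multiplicative unit $1$. A natural number $n$ is identified with $1+\dots+1$ ($n$ times) in $X$. A semiring homomorphism preserves addition, zero and multiplication; a unital one also preserves $1$. *)

From HB Require Import structures.
From mathcomp Require Import all_boot all_algebra.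
Set Implicit Arguments. Unset Strict Implicit. Unset Printing Implicit Defensive.
Import GRing.Theory.
Local Open Scope ring_scope.

(* A unital semiring (1 = 0 allowed) is a MathComp pzSemiRingType:
   commutative additive monoid, associative multiplication with unit 1,
   distributivity, 0 absorbing. *)

Definition nu (X : pzSemiRingType) (x : X) : X := x + x.

Definition nuX (X : pzSemiRingType) (a : X) : Prop := a = a + a.

Definition semiring_hom (X Y : pzSemiRingType) (f : X -> Y) : Prop :=
  [/\ forall x y, f (x + y) = f x + f y, f 0 = 0
    & forall x y, f (x * y) = f x * f y].

(* The subset S of X, with the operations +, 0, * restricted from X, is a
   unital idempotent semiring with multiplicative unit e: S is closed under
   +, 0, *, addition on S is idempotent, e lies in S and is a two-sided unit
   for S. (Associativity, commutativity, distributivity and absorption are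
   inherited from X.) *)
Definition unital_idempotent_subsemiring (X : pzSemiRingType)
    (S : X -> Prop) (e : X) : Prop :=
  S 0 /\
  (forall a b, S a -> S b -> S (a + b)) /\
  (forall a b, S a -> S b -> S (a * b)) /\
  (forall a, S a -> a + a = a) /\
  S e /\
  (forall a, S a -> e * a = a /\ a * e = a).

Definition corestriction_unital_hom (X : pzSemiRingType)
    (f : X -> X) (S : X -> Prop) (e : X) : Prop :=
  [/\ forall x, S (f x), semiring_hom f & f 1 = e].

From mathcomp Require Import all_boot all_algebra.
Set Implicit Arguments. Unset Strict Implicit. Unset Printing Implicit Defensive.
Import GRing.Theory.
Local Open Scope ring_scope.

(* Doubling is left multiplication by the central element 2, so it is
   additive, nu (nu x) = 4 x and nu x * nu y = 4 (x y).  Each of (2)-(4)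
   therefore reduces to 2 = 4 by evaluating at 1, and conversely 2 = 4 makes
   nu multiplicative and idempotent.  On nu X = {a | a = a + a} we have
   nu a = a, so nu 1 = 2 acts there as the identity. *)

Section Doubling.

Variable X : pzSemiRingType.
Implicit Types x y a b : X.

Lemma nuE x : nu x = 2%:R * x.
Proof. by rewrite /nu mulr_natl mulr2n. Qed.

Lemma nuEr x : nu x = x * 2%:R.
Proof. by rewrite /nu mulr_natr mulr2n. Qed.

Lemma nuD x y : nu (x + y) = nu x + nu y.
Proof. by rewrite !nuE mulrDr. Qed.

Lemma nu0 : nu (0 : X) = 0.
Proof. by rewrite nuE mulr0. Qed.

Lemma nu_nu x : nu (nu x) = 4%:R * x.
Proof. by rewrite nuE nuE mulrA -natrM. Qed.

Lemma nuM_nu x y : nu x * nu y = 4%:R * (x * y).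
Proof. by rewrite !nuE !mulr_natl mulrnAl mulrnAr -mulrnA. Qed.

Lemma nu1 : nu (1 : X) = 2%:R.
Proof. by rewrite nuE mulr1. Qed.

Lemma nu_nu1 : nu (nu (1 : X)) = 4%:R.
Proof. by rewrite nu_nu mulr1. Qed.

Lemma nu_idem_iff : (forall x, nu (nu x) = nu x) <-> (2%:R : X) = 4%:R.
Proof.
split=> [nu_idem | two_eq_four x]; first by rewrite -nu_nu1 nu_idem nu1.
by rewrite nu_nu nuE two_eq_four.
Qed.

Lemma nu_hom_iff : semiring_hom (@nu X) <-> (2%:R : X) = 4%:R.
Proof.
split=> [[_ _ nuM] | two_eq_four].
  by have := nuM 1 1; rewrite nuM_nu !mulr1 nu1 => <-.
split=> [x y | | x y]; first exact: nuD; first exact: nu0.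
by rewrite nuM_nu nuE two_eq_four.
Qed.

Lemma nuX_nu a : nuX a -> nu a = a.
Proof. by rewrite /nuX /nu => <-. Qed.

Lemma nuX_nu_of_idem x :
  (forall y, nu (nu y) = nu y) -> nuX (nu x).
Proof. by move=> nu_idem; rewrite /nuX -[RHS]/(nu (nu x)) nu_idem. Qed.

Lemma nu_image_iff :
  (forall a, (exists x, a = nu x) <-> nuX a) <-> (2%:R : X) = 4%:R.
Proof.
split=> [image_nuX | two_eq_four a].
  have nuX_nu1 : nuX (nu (1 : X)) by apply/image_nuX; exists 1.
  by rewrite -nu_nu1 -nu1 (nuX_nu nuX_nu1).
have /nu_idem_iff nu_idem := two_eq_four.
split=> [[x ->] | nuXa]; first exact: nuX_nu_of_idem.
by exists a; rewrite nuX_nu.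
Qed.

Lemma nuX0 : nuX (0 : X).
Proof. by rewrite /nuX addr0. Qed.

Lemma nuXD a b : nuX a -> nuX b -> nuX (a + b).
Proof. by rewrite /nuX addrACA => <- <-. Qed.

Lemma nuXMr a b : nuX a -> nuX (a * b).
Proof. by rewrite /nuX -mulrDl => <-. Qed.

Lemma nuX_unit a : nuX a -> nu 1 * a = a /\ a * nu 1 = a.
Proof. by move=> nuXa; rewrite nu1 -nuE -nuEr nuX_nu. Qed.

End Doubling.

Theorem proposition5p1 (X : pzSemiRingType) :
  let P1 := (2%:R : X) = 4%:R in
  let P2 := semiring_hom (@nu X) in
  let P3 := forall x : X, nu (nu x) = nu x in
  let P4 := forall a : X, (exists x : X, a = nu x) <-> nuX a in
  [/\ P1 <-> P2, P1 <-> P3, P1 <-> P4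
    & P1 -> unital_idempotent_subsemiring (@nuX X) (nu 1)
            /\ corestriction_unital_hom (@nu X) (@nuX X) (nu 1)].
Proof.
move=> P1 P2 P3 P4; rewrite {}/P1 {}/P2 {}/P3 {}/P4.
split; [exact: iff_sym (nu_hom_iff X) | exact: iff_sym (nu_idem_iff X)
       | exact: iff_sym (nu_image_iff X) | move=> two_eq_four].
have /nu_idem_iff nu_idem := two_eq_four.
have nu_hom : semiring_hom (@nu X) by apply/nu_hom_iff.
split; last by split=> // x; apply: nuX_nu_of_idem.
split; first exact: nuX0.
split; first exact: nuXD.
split; first by move=> a b /nuXMr.
split; first by move=> a /esym.
split; first exact: nuX_nu_of_idem.
exact: nuX_unit.
Qed.
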